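(* Let $V=\{1,\dots,p\}$ and $F:2^V\to\mathbb{R}$ be submodular, nondecreasing, with $F(\varnothing)=0$ and $F(\{k\})>0$ for all $k$. Let $\Omega(w)=f(|w|)$ with $f$ the Lovász extension of $F$. Let $w\in\mathbb{R}^p$ with support $J=\mathrm{Supp}(w)$ and let $H$ be the smallest stable set containing $J$. Then, identifying $\mathbb{R}^V=\mathbb{R}^J\times\mathbb{R}^{H\setminus J}\times\mathbb{R}^{H^c}$, the subdifferential of $\Omega$ at $w$ is $$\partial\Omega(w)=\partial\Omega_J(w_J)\times\{0\}\times\{s_{H^c}\in\mathbb{R}^{H^c}:(\Omega^H)^\ast(s_{H^c})\leqslant1\}.$$
   Context: The Lovász extension of a set-function $G$ on a finite set $W$: for $w\in\mathbb{R}_+^W$ with $w_{j_1}\geqslant\cdots\geqslant w_{j_m}\geqslant0$, it equals $\sum_k w_{j_k}[G(\{j_1,\dots,j_k\})-G(\{j_1,\dots,j_{k-1}\})]$. A set $A\subset V$ is stable if every strict superset $B\supsetneq A$ has $F(B)>F(A)$; stable sets are closed under intersection and $V$ is stable, so the smallest stable set containing $J$ exists. For $K\subset V$: $\Omega_K(u)=f_K(|u|)$ on $\mathbb{R}^K$, where $f_K$ is the Lovász extension of the restriction $F_K(A)=F(A)$, $A\subset K$; $\Omega^K(v)=f^K(|v|)$ on $\mathbb{R}^{K^c}$, where $f^K$ is the Lovász extension of the contraction $F^K(A)=F(A\cup K)-F(K)$, $A\subset K^c$; $(\Omega^H)^\ast(s)=\max\{s^\top v:\Omega^H(v)\leqslant1\}$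 is the dual norm of $\Omega^H$. *)

From HB Require Import structures.
From mathcomp Require Import all_boot all_order all_algebra.
From mathcomp Require Import classical_sets reals.
Set Implicit Arguments. Unset Strict Implicit. Unset Printing Implicit Defensive.
Import Order.TTheory GRing.Theory Num.Theory.
Local Open Scope ring_scope.


(* A vector of R^W (W a subset of V) is represented by
   a function 'I_p -> R of which only the coordinates in W are read. *)

Section Lovasz.
Variables (R : realType) (p : nat).

Fixpoint lovasz_aux (G : {set 'I_p} -> R) (w : 'I_p -> R)
    (prefix : {set 'I_p}) (s : seq 'I_p) : R :=
  match s with
  | [::] => 0
  | j :: s' => w j * (G (j |: prefix) - G prefix)
               + lovasz_aux G w (j |: prefix) s'
  end.

Definition lovasz (W : {set 'I_p}) (G : {set 'I_p} -> R) (w : 'I_p -> R) : R :=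
  lovasz_aux G w finset.set0 (sort (fun i j => w j <= w i) (enum W)).

Definition vabs (w : 'I_p -> R) : 'I_p -> R := fun i => `|w i|.

Definition Omega (F : {set 'I_p} -> R) (w : 'I_p -> R) : R :=
  lovasz [set: 'I_p] F (vabs w).

Definition Omega_restr (F : {set 'I_p} -> R) (K : {set 'I_p})
    (u : 'I_p -> R) : R :=
  lovasz K F (vabs u).

Definition Omega_contr (F : {set 'I_p} -> R) (K : {set 'I_p})
    (v : 'I_p -> R) : R :=
  lovasz (~: K) (fun A => F (A :|: K) - F K) (vabs v).

Definition subdiff (W : {set 'I_p}) (g : ('I_p -> R) -> R) (w : 'I_p -> R)
  : set ('I_p -> R) :=
  (fun s => forall v : 'I_p -> R,
      g w + \sum_(i in W) s i * (v i - w i) <= g v).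

Definition dual_Omega_contr (F : {set 'I_p} -> R) (H : {set 'I_p})
    (s : 'I_p -> R) : R :=
  sup (fun x : R => exists2 v : 'I_p -> R,
          Omega_contr F H v <= 1 & x = \sum_(i in ~: H) s i * v i).

Definition submodular (F : {set 'I_p} -> R) :=
  forall A B : {set 'I_p}, F (A :|: B) + F (A :&: B) <= F A + F B.

Definition nondecreasing_setfun (F : {set 'I_p} -> R) :=
  forall A B : {set 'I_p}, A \subset B -> F A <= F B.

Definition stable (F : {set 'I_p} -> R) (A : {set 'I_p}) :=
  forall B : {set 'I_p}, A \proper B -> F A < F B.

Definition supp (w : 'I_p -> R) : {set 'I_p} := [set i | w i != 0].

Definition smallest_stable_containing (F : {set 'I_p} -> R)
    (J H : {set 'I_p}) :=
  [/\ stable F H, J \subset H &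
      forall A : {set 'I_p}, stable F A -> J \subset A -> H \subset A].

End Lovasz.

From HB Require Import structures.
From mathcomp Require Import all_boot all_order all_algebra.
From mathcomp Require Import classical_sets reals.
From mathcomp Require Import ring lra.
From mathcomp Require Import fintype finset.
Set Implicit Arguments. Unset Strict Implicit. Unset Printing Implicit Defensive.
Import Order.TTheory GRing.Theory Num.Theory.
Local Open Scope ring_scope.

(* On nonnegative vectors the Lovasz extension f of a submodular G with
   G(empty) = 0 is the support function of the polyhedron
   P(G) = {t | t(A) <= G(A) for all A}: the greedy vector along a
   nonincreasing ordering of x lies in P(G) and attains f(x), and Abel
   summation along that ordering gives t.x <= f(x) for every t in P(G), with
   equality forcing t({x > 0}) = G({x > 0}).  Hence s is a subgradient of
   Omega at w iff |s| is in P(F) and s.w = Omega(w).  As F(H) = F(J) for the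
   smallest stable H containing J, submodularity splits "|s| in P(F) and
   |s|(J) = F(J)" into |s| in P(F_J), s = 0 on H \ J and |s| in P(F^H), and
   the last condition is (Omega^H)^*(s) <= 1.  That dual norm is a genuine
   supremum because stability of H makes F^H positive on singletons. *)

Section Lovasz.
Variables (R : realType) (p : nat).
Implicit Types (G : {set 'I_p} -> R) (W J A P : {set 'I_p}) (s : seq 'I_p).
Implicit Types (t x : 'I_p -> R).

Definition in_polyhedron W G t := forall A, A \subset W -> \sum_(i in A) t i <= G A.

Fixpoint greedy G P s i : R :=
  if s is j :: s' then
    if i == j then G (j |: P) - G P else greedy G (j |: P) s' i
  else 0.

Lemma lovasz_auxE G x P s :
  uniq s -> lovasz_aux G x P s = \sum_(i <- s) greedy G P s i * x i.
Proof.
elim: s P => [|j s IH] P /=; first by rewrite big_nil.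
move=> /andP[js us]; rewrite big_cons eqxx IH // mulrC; congr (_ + _).
by apply: eq_big_seq => i si; rewrite ifN //; apply: contraNneq js => <-.
Qed.

Lemma greedy_cat G P s1 s2 i :
  i \in s1 -> greedy G P (s1 ++ s2) i = greedy G P s1 i.
Proof.
elim: s1 P => [|j s IH] P //=.
by rewrite inE; case: eqP => // _ /= /IH.
Qed.

Lemma greedy_sum_le G P A s : submodular G -> uniq s ->
  \sum_(i <- s | i \in A) greedy G P s i <=
    G (A :&: (P :|: [set i | i \in s])) - G (A :&: P).
Proof.
move=> Gsub; elim: s P => [|j s IH] P /=.
  by rewrite big_nil (_ : [set i | i \in [::]] = set0) ?setU0 ?subrr // -setP.
move=> /andP[js us]; rewrite big_cons eqxx.
have -> : \sum_(i <- s | i \in A) greedy G P (j :: s) i =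
          \sum_(i <- s | i \in A) greedy G (j |: P) s i.
  rewrite big_seq_cond [RHS]big_seq_cond; apply: eq_bigr => i /andP[si _] /=.
  by rewrite ifN //; apply: contraNneq js => <-.
have -> : P :|: [set i | i \in j :: s] = (j |: P) :|: [set i | i \in s].
  by apply/setP => i; rewrite !inE orbA [(i == j) || _]orbC.
have {}IH := IH (j |: P) us.
case: ifP => jA; last first.
  rewrite (_ : A :&: (j |: P) = A :&: P) // in IH.
  by apply/setP => i; rewrite !inE; case: eqP => // ->; rewrite jA.
have E1 : P :|: A :&: (j |: P) = j |: P.
  apply/setP => i; rewrite !inE; case: eqP => [->|_] /=; first by rewrite jA orbT.
  by case: (i \in P); rewrite ?andbF.
have E2 : P :&: (A :&: (j |: P)) = A :&: P.
  by apply/setP => i; rewrite !inE; case: (i \in P); case: (i \in A); rewrite /= ?orbT.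
have := Gsub P (A :&: (j |: P)); rewrite E1 E2; lra.
Qed.

Lemma greedy_in_polyhedron G W s : submodular G -> G set0 = 0 ->
  uniq s -> {subset W <= s} -> in_polyhedron W G (greedy G set0 s).
Proof.
move=> Gsub G0 us Ws A AW; have := greedy_sum_le set0 A Gsub us.
rewrite setI0 G0 subr0 set0U (_ : A :&: _ = A); last first.
  by apply/setIidPl/subsetP => i /(subsetP AW) /Ws; rewrite inE.
rewrite -big_filter big_uniq ?filter_uniq // (eq_bigl (mem A)) // => i.
by rewrite mem_filter andb_idr // => /(subsetP AW) /Ws.
Qed.

Definition desc_enum W x := sort (fun i j => x j <= x i) (enum W).

Lemma desc_enum_uniq W x : uniq (desc_enum W x).
Proof. by rewrite sort_uniq enum_uniq. Qed.

Lemma mem_desc_enum W x : desc_enum W x =i W.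
Proof. by move=> i; rewrite mem_sort mem_enum. Qed.

Lemma desc_enum_sorted W x : sorted (fun i j => x j <= x i) (desc_enum W x).
Proof. by apply: sort_sorted => i j; exact: le_total. Qed.

Lemma big_desc_enum W x (f : 'I_p -> R) :
  \sum_(i <- desc_enum W x) f i = \sum_(i in W) f i.
Proof.
by rewrite big_uniq ?desc_enum_uniq //; apply: eq_bigl => i; rewrite mem_desc_enum.
Qed.

Section LovaszGap.
Variables (G : {set 'I_p} -> R) (W : {set 'I_p}) (t x : 'I_p -> R).
Hypotheses (tW : in_polyhedron W G t) (x_ge0 : forall i, i \in W -> 0 <= x i).

(* [s] continues a nonincreasing enumeration of [W] that has already visited
   [P] and whose last value was [c]. *)
Definition desc_walk P c s := [/\ uniq s, P \subset W, {subset s <= W :\: P},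
  0 <= c & path >=%R c [seq x i | i <- s]].

Lemma desc_walk_cons P c j s : desc_walk P c (j :: s) ->
  [/\ j \notin P, x j <= c & desc_walk (j |: P) (x j) s].
Proof.
case=> /andP[js us] PW sW c0 /andP[xjc pth].
have /setDP[jW jP] : j \in W :\: P by apply: sW; rewrite mem_head.
split=> //; split=> //; last exact: x_ge0.
- by rewrite subUset sub1set jW.
- move=> i si; have /setDP[iW iP] : i \in W :\: P by apply: sW; rewrite inE si orbT.
  rewrite !inE negb_or iW iP !andbT; apply: contraNneq js => <-; exact: si.
Qed.

(* Abel summation of [lovasz_aux - t.x] along a descending walk: each step adds
   [(c - x j) * (G P - t(P)) >= 0], [c] being the previous value of [x]. *)
Definition lovasz_gap P c s :=
  lovasz_aux G x P s + c * (G P - \sum_(i in P) t i) - \sum_(i <- s) t i * x i.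

Lemma lovasz_gap_cons P c j s : j \notin P ->
  lovasz_gap P c (j :: s) =
    lovasz_gap (j |: P) (x j) s + (c - x j) * (G P - \sum_(i in P) t i).
Proof.
move=> jP; rewrite /lovasz_gap /= big_setU1 // big_cons /=.
set a := lovasz_aux _ _ _ _; set b := \sum_(i in P) t i; set d := \sum_(i <- s) _.
ring.
Qed.

Lemma lovasz_gap_step_ge0 P c j : P \subset W -> x j <= c ->
  0 <= (c - x j) * (G P - \sum_(i in P) t i).
Proof. by move=> PW xjc; rewrite mulr_ge0 ?subr_ge0 ?tW. Qed.

Lemma lovasz_gap_ge0 P c s : desc_walk P c s -> 0 <= lovasz_gap P c s.
Proof.
elim: s P c => [|j s IH] P c.
  case=> _ PW _ c0 _; rewrite /lovasz_gap /= big_nil subr0 add0r.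
  by rewrite mulr_ge0 ?subr_ge0 ?tW.
move=> w; have [jP xjc w'] := desc_walk_cons w; case: w => _ PW _ _ _.
by rewrite lovasz_gap_cons // addr_ge0 ?IH ?lovasz_gap_step_ge0.
Qed.

Lemma lovasz_gap_cat P c s1 s2 : desc_walk P c (s1 ++ s2) ->
  lovasz_gap (P :|: [set i | i \in s1]) (last c [seq x i | i <- s1]) s2 <=
    lovasz_gap P c (s1 ++ s2).
Proof.
elim: s1 P c => [|j s IH] P c w.
  by rewrite (_ : [set i | i \in [::]] = set0) ?setU0 // -setP.
have [jP xjc w'] := desc_walk_cons w; case: w => _ PW _ _ _.
rewrite lovasz_gap_cons // (_ : P :|: _ = (j |: P) :|: [set i | i \in s]); last first.
  by apply/setP => i; rewrite !inE orbA [(i == j) || _]orbC.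
by rewrite -[X in X <= _]addr0 lerD ?IH ?lovasz_gap_step_ge0.
Qed.

Lemma desc_walk_cat P c s1 s2 : desc_walk P c (s1 ++ s2) ->
  desc_walk (P :|: [set i | i \in s1]) (last c [seq x i | i <- s1]) s2.
Proof.
elim: s1 P c => [|j s IH] P c w.
  by rewrite (_ : [set i | i \in [::]] = set0) ?setU0 // -setP.
have [_ _ /IH] := desc_walk_cons w.
by rewrite (_ : _ :|: _ = P :|: [set i | i \in j :: s]) // -setP => i;
  rewrite !inE orbA [(i == j) || _]orbC.
Qed.

Lemma lovasz_gap_ge_head P c s :
  desc_walk P c s -> (forall i, i \in s -> x i = 0) ->
  c * (G P - \sum_(i in P) t i) <= lovasz_gap P c s.
Proof.
case: s => [|j s] w s0; first by rewrite /lovasz_gap /= big_nil subr0 add0r.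
have [jP _ w'] := desc_walk_cons w.
have := lovasz_gap_ge0 w'; rewrite lovasz_gap_cons // s0 ?mem_head // subr0.
by move=> ?; rewrite lerDr.
Qed.

End LovaszGap.

Lemma desc_enum_walk W x : (forall i, i \in W -> 0 <= x i) ->
  desc_walk W x set0 (head 0 [seq x i | i <- desc_enum W x]) (desc_enum W x).
Proof.
move=> x_ge0; split; rewrite ?desc_enum_uniq ?sub0set //.
- by move=> i; rewrite setD0 mem_desc_enum.
- case E: (desc_enum W x) => [|j s] //=; apply: x_ge0.
  by rewrite -(mem_desc_enum W x) E mem_head.
- have := desc_enum_sorted W x.
  by case: (desc_enum W x) => //= j s; rewrite lexx path_map.
Qed.

Lemma lovasz_gap_desc_enum G W t x : G set0 = 0 ->
  lovasz_gap G t x set0 (head 0 [seq x i | i <- desc_enum W x]) (desc_enum W x) =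
    lovasz W G x - \sum_(i in W) t i * x i.
Proof. by move=> G0; rewrite /lovasz_gap G0 big_set0 subrr mulr0 addr0 big_desc_enum. Qed.

Lemma lovasz_ge_polyhedron W G t x : G set0 = 0 -> in_polyhedron W G t ->
  (forall i, i \in W -> 0 <= x i) -> \sum_(i in W) t i * x i <= lovasz W G x.
Proof.
move=> G0 tW x_ge0; rewrite -subr_ge0 -(lovasz_gap_desc_enum W t x G0).
exact/(lovasz_gap_ge0 tW x_ge0)/desc_enum_walk.
Qed.

Lemma lovasz_greedy W G x : submodular G -> G set0 = 0 ->
  exists2 t, in_polyhedron W G t & lovasz W G x = \sum_(i in W) t i * x i.
Proof.
move=> Gsub G0; exists (greedy G set0 (desc_enum W x)).
  by apply: greedy_in_polyhedron; rewrite ?desc_enum_uniq // => i; rewrite mem_desc_enum.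
by rewrite /lovasz lovasz_auxE ?desc_enum_uniq // -/(desc_enum W x) big_desc_enum.
Qed.

Lemma lovasz_eq0 W G x : (forall i, x i = 0) -> lovasz W G x = 0.
Proof.
move=> x0; rewrite /lovasz lovasz_auxE ?sort_uniq ?enum_uniq //.
by rewrite big1 // => i _; rewrite x0 mulr0.
Qed.

Lemma sum_mul_on_supp W J t x : J \subset W -> (forall i, i \notin J -> x i = 0) ->
  \sum_(i in W) t i * x i = \sum_(i in J) t i * x i.
Proof.
move=> JW xJ; rewrite (big_setID J) /= (setIidPr JW) [X in _ + X]big1 ?addr0 //.
move=> i /setDP[_ /xJ ->]; exact: mulr0.
Qed.

Lemma lovasz_indicator_le W A G (k : R) : submodular G -> G set0 = 0 ->
  A \subset W -> 0 <= k -> lovasz W G (fun i => if i \in A then k else 0) <= k * G A.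
Proof.
move=> Gsub G0 AW k0.
have [t tW ->] := lovasz_greedy W (fun i => if i \in A then k else 0) Gsub G0.
rewrite (sum_mul_on_supp _ AW) => [|i /negbTE -> //].
rewrite (eq_bigr (fun i => t i * k)) => [|i ->] //.
by rewrite -mulr_suml mulrC ler_wpM2l ?tW.
Qed.

Lemma lovasz_scale_le W G x (k : R) : submodular G -> G set0 = 0 -> 0 <= k ->
  (forall i, i \in W -> 0 <= x i) -> lovasz W G (fun i => k * x i) <= k * lovasz W G x.
Proof.
move=> Gsub G0 k0 x_ge0; have [t tW ->] := lovasz_greedy W (fun i => k * x i) Gsub G0.
rewrite (eq_bigr (fun i => k * (t i * x i))) => [|i _]; last by rewrite mulrCA.
by rewrite -mulr_sumr ler_wpM2l ?lovasz_ge_polyhedron.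
Qed.

Lemma sorted_desc_split x s : sorted (fun i j => x j <= x i) s ->
  [seq i <- s | 0 < x i] ++ [seq i <- s | ~~ (0 < x i)] = s.
Proof.
elim: s => //= j s IH js; case: ifP => /= [_|/negbT xj].
  by rewrite IH // (path_sorted js).
have /allP xs : all (fun i => x i <= x j) s.
  by apply: order_path_min js => a b c ba cb; exact: le_trans cb ba.
have s_nonpos i : i \in s -> ~~ (0 < x i).
  by move=> /xs xij; apply: contra xj => /lt_le_trans; apply.
rewrite (eq_in_filter (a2 := pred0)) ?filter_pred0 => [|i /s_nonpos /negbTE //].
by rewrite (eq_in_filter (a2 := predT)) ?filter_predT // => i /s_nonpos.
Qed.

Lemma lovasz_tight W G t x : G set0 = 0 -> in_polyhedron W G t ->
  (forall i, i \in W -> 0 <= x i) -> \sum_(i in W) t i * x i = lovasz W G x ->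
  \sum_(i in [set i in W | 0 < x i]) t i = G [set i in W | 0 < x i].
Proof.
move=> G0 tW x_ge0 tx; set Q := [set i in W | 0 < x i].
set s1 := [seq i <- desc_enum W x | 0 < x i].
set s2 := [seq i <- desc_enum W x | ~~ (0 < x i)].
set c := head 0 [seq x i | i <- desc_enum W x].
have sE : s1 ++ s2 = desc_enum W x by apply/sorted_desc_split/desc_enum_sorted.
have w : desc_walk W x set0 c (s1 ++ s2) by rewrite sE; exact: desc_enum_walk.
have QE : set0 :|: [set i | i \in s1] = Q.
  by apply/setP => i; rewrite !inE mem_filter mem_desc_enum andbC.
have s2_0 : forall i, i \in s2 -> x i = 0.
  move=> i; rewrite mem_filter -leNgt mem_desc_enum => /andP[xi0 iW].
  by apply/le_anti; rewrite xi0 x_ge0.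
set c' := last c [seq x i | i <- s1].
have gap_le0 : c' * (G Q - \sum_(i in Q) t i) <= 0.
  have := lovasz_gap_ge_head tW x_ge0 (desc_walk_cat x_ge0 w) s2_0.
  have := lovasz_gap_cat tW x_ge0 w.
  rewrite sE (lovasz_gap_desc_enum W t x G0) -tx subrr QE => gap_le head_le.
  exact: le_trans head_le gap_le.
have QW : Q \subset W by apply/subsetP => i; rewrite inE => /andP[].
apply/eqP; rewrite eq_le tW //=.
case E1 : s1 => [|j s] in c' QE gap_le0 *.
  by rewrite -QE (_ : [set i | i \in [::]] = set0) ?setU0 ?G0 ?big_set0 // -setP.
have c'_gt0 : 0 < c'.
  have : c' \in [seq x i | i <- s1] by rewrite /c' E1 /= mem_last.
  by case/mapP => i; rewrite mem_filter => /andP[? _] ->.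
by rewrite pmulr_rle0 // subr_le0 in gap_le0.
Qed.

Lemma lovasz_restrict W J G x : submodular G -> G set0 = 0 -> J \subset W ->
  (forall i, i \in W -> 0 <= x i) -> (forall i, i \notin J -> x i = 0) ->
  lovasz J G x = lovasz W G x.
Proof.
move=> Gsub G0 JW x_ge0 xJ; apply/le_anti/andP; split.
  pose s := desc_enum J x ++ enum (W :\: J).
  have us : uniq s.
    rewrite cat_uniq desc_enum_uniq enum_uniq /= andbT; apply/hasPn => i.
    by rewrite mem_enum mem_desc_enum => /setDP[].
  have Ws : {subset W <= s}.
    by move=> i iW; rewrite mem_cat mem_desc_enum mem_enum inE iW andbT orbN.
  have tW := greedy_in_polyhedron Gsub G0 us Ws.
  apply: le_trans (lovasz_ge_polyhedron G0 tW x_ge0); rewrite (sum_mul_on_supp _ JW xJ).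
  rewrite /lovasz lovasz_auxE ?desc_enum_uniq // -/(desc_enum J x) -(big_desc_enum J x).
  by rewrite le_eqVlt; apply/orP; left; apply/eqP/eq_big_seq => i ?; rewrite greedy_cat.
have [t tW ->] := lovasz_greedy W x Gsub G0; rewrite (sum_mul_on_supp _ JW xJ).
apply: lovasz_ge_polyhedron => // [A AJ|i iJ]; first exact/tW/(subset_trans AJ).
exact/x_ge0/(subsetP JW).
Qed.

Lemma le0_of_bounded_multiples (d e : R) : (forall l, 0 < l -> l * d <= e) -> d <= 0.
Proof.
move=> bnd; rewrite leNgt; apply/negP => d_gt0.
have := bnd ((`|e| + 1) / d); rewrite divfK ?gt_eqF // divr_gt0 ?ltr_wpDl //.
by have := ler_norm e; lra.
Qed.

Lemma sum_mul_le_abs W (s v : 'I_p -> R) :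
  \sum_(i in W) s i * v i <= \sum_(i in W) vabs s i * vabs v i.
Proof. by apply: ler_sum => i _; rewrite -normrM ler_norm. Qed.

Definition sign_on (s : 'I_p -> R) A i : R :=
  if i \in A then (if 0 <= s i then 1 else -1) else 0.

Lemma vabs_sign_on (s : 'I_p -> R) A :
  vabs (sign_on s A) = fun i => if i \in A then 1 else 0.
Proof.
apply: boolp.funext => i; rewrite /vabs /sign_on; case: (i \in A); last exact: normr0.
by case: ifP; rewrite ?normrN normr1.
Qed.

Lemma sum_mul_sign_on W (s : 'I_p -> R) A : A \subset W ->
  \sum_(i in W) s i * sign_on s A i = \sum_(i in A) vabs s i.
Proof.
move=> AW; rewrite (sum_mul_on_supp _ AW) => [|i /negbTE]; last by rewrite /sign_on => ->.
apply: eq_bigr => i iA; rewrite /sign_on /vabs iA.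
by case: (lerP 0 (s i)) => s0; [rewrite mulr1 ger0_norm | rewrite mulrN1 ltr0_norm].
Qed.

Lemma polyhedron_absP W G (s : 'I_p -> R) : submodular G -> G set0 = 0 ->
  in_polyhedron W G (vabs s) <-> forall u, \sum_(i in W) s i * u i <= lovasz W G (vabs u).
Proof.
move=> Gsub G0; split=> [sW u | su A AW].
  apply: le_trans (sum_mul_le_abs W s u) (lovasz_ge_polyhedron _ _ _) => // i _.
  exact: normr_ge0.
rewrite -(sum_mul_sign_on s AW); apply: le_trans (su _) _.
by rewrite vabs_sign_on -[X in _ <= X]mul1r lovasz_indicator_le.
Qed.

Lemma subdiff_lovasz_absP W G (w s : 'I_p -> R) : submodular G -> G set0 = 0 ->
  subdiff W (fun v => lovasz W G (vabs v)) w s <->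
  in_polyhedron W G (vabs s) /\ \sum_(i in W) s i * w i = lovasz W G (vabs w).
Proof.
move=> Gsub G0; rewrite polyhedron_absP //.
have sumB v : \sum_(i in W) s i * (v i - w i) =
               \sum_(i in W) s i * v i - \sum_(i in W) s i * w i.
  by rewrite -sumrB; apply: eq_bigr => i _; rewrite mulrBr.
split=> [sub | [su sw] v]; last by rewrite sumB sw addrC subrK su.
have su u : \sum_(i in W) s i * u i <= lovasz W G (vabs u).
  rewrite -subr_le0.
  apply: (le0_of_bounded_multiples (e := \sum_(i in W) s i * w i - lovasz W G (vabs w))).
  move=> l l_gt0; have := sub (fun i => l * u i); rewrite sumB.
  have -> : vabs (fun i => l * u i) = (fun i => l * vabs u i).
    by apply: boolp.funext => i; rewrite /vabs normrM gtr0_norm.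
  have := lovasz_scale_le (W := W) (x := vabs u) Gsub G0 (ltW l_gt0)
    (fun i _ => normr_ge0 (u i)).
  rewrite (eq_bigr (fun i => l * (s i * u i))) -?mulr_sumr => [|i _]; last first.
    by rewrite mulrCA.
  lra.
split=> //; apply/le_anti; rewrite su /=.
have := sub (fun=> 0); rewrite sumB (lovasz_eq0 W G (x := vabs (fun=> 0))) => [|i].
  by rewrite big1 ?sub0r => [|i _]; [lra | rewrite mulr0].
by rewrite /vabs normr0.
Qed.

Lemma lovasz_ge_singleton W G x i : nondecreasing_setfun G -> G set0 = 0 ->
  i \in W -> (forall j, j \in W -> 0 <= x j) -> G [set i] * x i <= lovasz W G x.
Proof.
move=> Gmono G0 iW x_ge0; pose t j := if j == i then G [set i] else 0.
have sum_t A : \sum_(j in A) t j = if i \in A then G [set i] else 0.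
  case: ifP => iA; last first.
    by rewrite big1 // => j jA; rewrite /t; case: eqP => // ji; rewrite -ji jA in iA.
  by rewrite (bigD1 i) //= /t eqxx big1 ?addr0 // => j /andP[_ /negbTE ->].
have tW : in_polyhedron W G t.
  move=> A _; rewrite sum_t; case: ifP => iA; first by rewrite Gmono ?sub1set.
  by rewrite -G0 Gmono ?sub0set.
apply: le_trans (lovasz_ge_polyhedron G0 tW x_ge0).
by rewrite (bigD1 i) //= /t eqxx big1 ?addr0 // => j /andP[_ /negbTE ->]; rewrite mul0r.
Qed.

End Lovasz.

Section SubmodularPolyhedra.
Variables (R : realType) (p : nat) (F : {set 'I_p} -> R).
Hypotheses (Fsub : submodular F) (Fmono : nondecreasing_setfun F).
Implicit Types (A B J H : {set 'I_p}) (t : 'I_p -> R).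

Definition contraction H A := F (A :|: H) - F H.

Lemma contraction_set0 H : contraction H set0 = 0.
Proof. by rewrite /contraction set0U subrr. Qed.

Lemma contraction_submodular H : submodular (contraction H).
Proof.
move=> A B; rewrite /contraction; have := Fsub (A :|: H) (B :|: H).
rewrite setUACA setUid -setUIl; lra.
Qed.

Lemma contraction_nondecreasing H : nondecreasing_setfun (contraction H).
Proof. by move=> A B AB; rewrite /contraction lerD2r Fmono ?setSU. Qed.

Lemma smallest_stable_containing_eq J H :
  smallest_stable_containing F J H -> F H = F J.
Proof.
case=> _ JH Hmin; pose P (K : {set 'I_p}) := (J \subset K) && (F K == F J).
have PJ : P J by rewrite /P subxx eqxx.
have [K /andP[JK /eqP FK] Kmax] := @arg_maxnP _ J P (fun K => #|K|) PJ.
have Kst : stable F K.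
  move=> B /[dup] KB /proper_sub KsB; rewrite ltNge; apply/negP => FB.
  have /Kmax : P B by rewrite /P (subset_trans JK KsB) -FK eq_le FB Fmono.
  by rewrite /= leqNgt proper_card.
apply/le_anti/andP; split; last exact: Fmono.
by rewrite -FK; apply/Fmono/Hmin.
Qed.

Lemma polyhedron_glue J H t : J \subset H -> (forall i, i \in H :\: J -> t i = 0) ->
  in_polyhedron J F t -> in_polyhedron (~: H) (contraction H) t ->
  in_polyhedron [set: 'I_p] F t.
Proof.
move=> JH t0 tJ tH A _; rewrite (big_setID H) /=.
have -> : \sum_(i in A :&: H) t i = \sum_(i in A :&: J) t i.
  rewrite (big_setID J) /= [X in _ + X]big1 ?addr0 => [|i]; last first.
    by rewrite !inE => /andP[iJ /andP[iA iH]]; rewrite t0 // !inE iJ iH.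
  by rewrite -setIA (setIidPr JH).
have h1 : \sum_(i in A :&: J) t i <= F (A :&: H).
  by rewrite (le_trans (tJ _ _)) ?Fmono ?setIS ?subsetIr.
have h2 : \sum_(i in A :\: H) t i <= F (A :|: H) - F H.
  rewrite (_ : A :|: H = (A :\: H) :|: H); first by apply/tH; rewrite setDE subsetIr.
  by apply/setP => i; rewrite !inE; case: (i \in H); rewrite ?orbT ?orbF.
have := Fsub A H; lra.
Qed.

Lemma polyhedron_split J H t : J \subset H -> F H = F J -> (forall i, 0 <= t i) ->
  in_polyhedron [set: 'I_p] F t -> \sum_(i in J) t i = F J ->
  (forall i, i \in H :\: J -> t i = 0) /\ in_polyhedron (~: H) (contraction H) t.
Proof.
move=> JH FHJ t_ge0 tV tJ.
have sumH : \sum_(i in H) t i = F J + \sum_(i in H :\: J) t i.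
  by rewrite (big_setID J) /= (setIidPr JH) tJ.
split.
  have : \sum_(i in H :\: J) t i <= 0 by have := tV H (subsetT _); rewrite sumH FHJ; lra.
  move=> sum_le0; apply/(psumr_eq0P (fun i _ => t_ge0 i))/le_anti.
  by rewrite sum_le0 sumr_ge0.
move=> A AH; rewrite /contraction.
have AHH : (A :|: H) :&: H = H by apply/setIidPr/subsetUr.
have AHA : (A :|: H) :\: H = A.
  apply/setP => i; rewrite !inE; case iH: (i \in H) => /=; last by rewrite orbF.
  by apply/esym/negbTE; move: iH; apply: contraL => /(subsetP AH); rewrite inE.
have := tV (A :|: H) (subsetT _); rewrite (big_setID H) /= AHH AHA.
have : F H <= \sum_(i in H) t i by rewrite sumH FHJ lerDl sumr_ge0.
lra.
Qed.

End SubmodularPolyhedra.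

Lemma dual_Omega_contr_le1P (R : realType) (p : nat) (F : {set 'I_p} -> R)
    (H : {set 'I_p}) (s : 'I_p -> R) :
  submodular F -> nondecreasing_setfun F -> stable F H ->
  dual_Omega_contr F H s <= 1 <-> in_polyhedron (~: H) (contraction F H) (vabs s).
Proof.
move=> Fsub Fmono Hst.
have Csub := contraction_submodular Fsub H; have C0 := contraction_set0 F H.
have Cmono := contraction_nondecreasing Fmono H.
have C1_gt0 i : i \notin H -> 0 < contraction F H [set i].
  move=> iH; rewrite subr_gt0; apply: Hst; apply/properP; split; first exact: subsetUr.
  by exists i; rewrite ?inE ?eqxx.
pose E x := exists2 v, Omega_contr F H v <= 1 & x = \sum_(i in ~: H) s i * v i.
have E0 : E 0.
  exists (fun=> 0); last by rewrite big1 // => i _; rewrite mulr0.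
  by rewrite /Omega_contr lovasz_eq0 // => i; rewrite /vabs normr0.
have E_sup : has_sup E.
  split; first by exists 0.
  exists (\sum_(i in ~: H) vabs s i / contraction F H [set i]) => _ [v v1 ->].
  apply: le_trans (sum_mul_le_abs _ s v) (ler_sum _ _) => i; rewrite inE => iH.
  rewrite ler_pdivlMr ?C1_gt0 // -mulrA -[X in _ <= X]mulr1 ler_wpM2l ?normr_ge0 // mulrC.
  apply: le_trans v1; apply: lovasz_ge_singleton; rewrite ?inE //.
  by move=> j _; exact: normr_ge0.
rewrite /dual_Omega_contr -/E; split=> [E_le1 | sP]; last first.
  apply: ge_sup; first by exists 0.
  by move=> _ [v v1 ->]; exact: le_trans ((polyhedron_absP (~: H) s Csub C0).1 sP v) v1.
move=> A AH; have [->|[i iA]] := set_0Vmem A; first by rewrite big_set0 C0.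
have c_gt0 : 0 < contraction F H A.
  apply: lt_le_trans (C1_gt0 i _) (Cmono _ _ _); last by rewrite sub1set.
  by have := subsetP AH i iA; rewrite inE.
pose v k := sign_on s A k / contraction F H A.
have Ev : E (\sum_(k in ~: H) s k * v k).
  exists v => //; rewrite /Omega_contr -/(contraction F H).
  rewrite (_ : vabs v = fun k => if k \in A then (contraction F H A)^-1 else 0).
    apply: le_trans (lovasz_indicator_le Csub C0 AH _) _; first by rewrite invr_ge0 ltW.
    by rewrite mulVf ?gt_eqF.
  apply: boolp.funext => k; rewrite /vabs /v /sign_on; case: ifP => _.
    rewrite normrM [`|_^-1|]gtr0_norm ?invr_gt0 //.
    by case: ifP; rewrite ?normrN normr1 mul1r.
  by rewrite mul0r normr0.
have := le_trans (sup_upper_bound E_sup Ev) E_le1.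
rewrite (eq_bigr (fun k => s k * sign_on s A k / contraction F H A)) => [|k _].
  by rewrite -mulr_suml sum_mul_sign_on // ler_pdivrMr // mul1r.
by rewrite mulrA.
Qed.

Unset Implicit Arguments.
Theorem lemma1 (R : realType) (p : nat) (F : {set 'I_p} -> R)
  (Fsub : submodular F) (Fmono : nondecreasing_setfun F) (F0 : F finset.set0 = 0)
  (Fpos : forall k : 'I_p, 0 < F [set k])
  (w : 'I_p -> R) (J H : {set 'I_p}) (HJ : J = supp w)
  (HH : smallest_stable_containing F J H) :
  subdiff [set: 'I_p] (Omega F) w =
  (fun s : 'I_p -> R =>
     [/\ subdiff J (Omega_restr F J) w s,
          (forall i, i \in H :\: J -> s i = 0) &
          dual_Omega_contr F H s <= 1]).
Proof.
have [Hst JH _] := HH; have FHJ := smallest_stable_containing_eq Fmono HH.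
have abs_ge0 (v : 'I_p -> R) i : 0 <= vabs v i by exact: normr_ge0.
have wJ i : i \notin J -> w i = 0 by rewrite HJ inE negbK => /eqP.
have sum_wJ (s : 'I_p -> R) : \sum_(i in [set: 'I_p]) s i * w i = \sum_(i in J) s i * w i.
  exact: sum_mul_on_supp (subsetT J) wJ.
have lovJ : lovasz J F (vabs w) = lovasz [set: 'I_p] F (vabs w).
  apply: lovasz_restrict => //.
  by move=> i /wJ wi; rewrite /vabs wi normr0.
apply/boolp.funext => s; apply/boolp.propext.
have subdiffP W := subdiff_lovasz_absP W w s Fsub F0.
have dualP := dual_Omega_contr_le1P s Fsub Fmono Hst.
split=> [/subdiffP [sV sw] | [/subdiffP [sJ swJ] s0 /dualP sH]].
- have tight : \sum_(i in J) vabs s i = F J.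
    have suppE : [set i in [set: 'I_p] | 0 < vabs w i] = J.
      by apply/setP => i; rewrite HJ !inE /vabs normr_gt0.
    rewrite -suppE; apply: (lovasz_tight F0 sV (fun i _ => abs_ge0 w i)).
    apply/le_anti; rewrite lovasz_ge_polyhedron //=.
    by move: (sum_mul_le_abs [set: 'I_p] s w); rewrite sw.
  have [s0 sH] := polyhedron_split JH FHJ (abs_ge0 s) sV tight.
  split; [apply/subdiffP; split | by move=> i /s0 /normr0_eq0 | exact/dualP].
    by move=> A AJ; apply/sV/subsetT.
  by rewrite -sum_wJ sw lovJ.
- apply/subdiffP; split; last by rewrite sum_wJ swJ lovJ.
  apply: (polyhedron_glue Fsub Fmono JH) sJ sH => i /s0 si.
  by rewrite /vabs si normr0.
Qed.
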